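(* Let $N\ge1$ and let $\Omega_P,\Omega_S\subset[0,\pi]$ be disjoint nonempty closed sets, each a finite union of closed intervals of positive length. Let $D(\omega)=1$ on $\Omega_P$ and $D(\omega)=0$ on $\Omega_S$. For $K>0$ let $W_K(\omega)=1$ on $\Omega_P$ and $W_K(\omega)=K$ on $\Omega_S$, and define $$\Delta_{P,res}(K)=\min_{c_0,\dots,c_N\in\mathbb{R}}\ \max_{\omega\in\Omega_P\cup\Omega_S}\Bigl|W_K(\omega)\Bigl(\sum_{n=0}^N c_n\cos(n\omega)-D(\omega)\Bigr)\Bigr|,$$ the minimax weighted error of the optimal even-symmetric (zero-phase) sequence of order $2N$ approximating $D$ with weight $W_K$. Then $\Delta_{P,res}$ is a strictly increasing function of $K$ on $(0,\infty)$: if $0<K_1<K_2$ then $\Delta_{P,res}(K_1)<\Delta_{P,res}(K_2)$. *)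

From Stdlib Require Import Reals List ClassicalEpsilon.
Open Scope R_scope.

(* A band is a finite union of closed intervals [a,b], given as a list of pairs. *)
Definition inBand (L : list (R * R)) (w : R) : Prop :=
  exists p, In p L /\ fst p <= w <= snd p.

Definition valid_band (L : list (R * R)) : Prop :=
  L <> nil /\ forall p, In p L -> 0 <= fst p /\ fst p < snd p /\ snd p <= PI.

Definition resp (N : nat) (c : nat -> R) (w : R) : R :=
  sum_f_R0 (fun n => c n * cos (INR n * w)) N.

Definition Dd (LP : list (R*R)) (w : R) : R :=
  if excluded_middle_informative (inBand LP w) then 1 else 0.
Definition WK (LP : list (R*R)) (K w : R) : R :=
  if excluded_middle_informative (inBand LP w) then 1 else K.

Definition werr (N : nat) (LP : list (R*R)) (K : R) (c : nat -> R) (w : R) : R :=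
  Rabs (WK LP K w * (resp N c w - Dd LP w)).

Definition is_max_err (N : nat) (LP LS : list (R*R)) (K : R) (c : nat -> R) (e : R) : Prop :=
  (exists w, (inBand LP w \/ inBand LS w) /\ werr N LP K c w = e) /\
  (forall w, inBand LP w \/ inBand LS w -> werr N LP K c w <= e).

Definition is_Delta (N : nat) (LP LS : list (R*R)) (K : R) (d : R) : Prop :=
  (exists c, is_max_err N LP LS K c d) /\
  (forall c e, is_max_err N LP LS K c e -> d <= e).

From Stdlib Require Import Reals List ClassicalEpsilon Lra Lia Psatz.
From Coquelicot Require Import Coquelicot.
Open Scope R_scope.

(* Let [c2] be optimal for [K2], with error [d2].  Pulling [c2] towards the
   constant response 1, i.e. taking (1 - t) c2 + t (1, 0, ..., 0), multiplies
   the passband error by 1 - t and leaves a stopband error of at most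
   (K1 / K2) d2 + K1 t at weight K1; both are below d2 for small t > 0, because
   d2 > 0: the cosines are linearly independent on a stopband interval, so the
   response cannot vanish there and equal 1 on the passband.
   The optima exist because the maximal error is a Lipschitz function of the
   coefficients which is coercive (the maximum of |resp c| over an interval is a
   norm of c), and a Lipschitz function attains its minimum on a box. *)

Definition ismax {A : Type} (S : A -> Prop) (g : A -> R) (v : R) : Prop :=
  (exists x, S x /\ g x = v) /\ (forall x, S x -> g x <= v).

Lemma ismax_uniq {A : Type} (S : A -> Prop) g v v' : ismax S g v -> ismax S g v' -> v = v'.
Proof.
  intros [[x [Hx <-]] Hv] [[x' [Hx' <-]] Hv']. apply Hv in Hx'. apply Hv' in Hx. lra.
Qed.

Lemma ismax_congr {A : Type} (S T : A -> Prop) (g h : A -> R) v :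
  (forall x, T x <-> S x) -> (forall x, T x -> g x = h x) -> ismax S h v -> ismax T g v.
Proof.
  intros HST Hgh [[x [Hx Ex]] Hv]. split.
  - exists x. split; [apply HST, Hx|]. rewrite Hgh; [exact Ex|apply HST, Hx].
  - intros y Hy. rewrite Hgh by exact Hy. apply Hv, HST, Hy.
Qed.

Lemma ismax_union {A : Type} (S T : A -> Prop) (g : A -> R) v v' :
  ismax S g v -> ismax T g v' -> ismax (fun x => S x \/ T x) g (Rmax v v').
Proof.
  intros [[x [Hx Ex]] Hv] [[x' [Hx' Ex']] Hv']. split.
  - apply Rmax_case; [exists x|exists x']; auto.
  - intros y [Hy|Hy]; [apply Hv in Hy|apply Hv' in Hy];
      pose proof (Rmax_l v v'); pose proof (Rmax_r v v'); lra.
Qed.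

Lemma ismax_lipschitz {A B : Type} (S : B -> Prop) (F : A -> B -> R) (M : A -> R)
    (d : A -> A -> R) :
  (forall a, ismax S (F a) (M a)) ->
  (forall a a' x, S x -> Rabs (F a x - F a' x) <= d a a') ->
  forall a a', Rabs (M a - M a') <= d a a'.
Proof.
  intros HM HF a a'.
  destruct (HM a) as [[x [Hx Ex]] Ha], (HM a') as [[x' [Hx' Ex']] Ha'].
  pose proof (HF a a' x Hx) as H1. pose proof (HF a a' x' Hx') as H2.
  apply Ha in Hx'. apply Ha' in Hx. apply Rabs_le.
  apply Rabs_le_between in H1. apply Rabs_le_between in H2. lra.
Qed.

Fixpoint dist1 (n : nat) (c c' : nat -> R) : R :=
  match n with O => 0 | S k => dist1 k c c' + Rabs (c k - c' k) end.

Definition lipschitz1 (n : nat) (L : R) (f : (nat -> R) -> R) : Prop :=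
  forall c c', Rabs (f c - f c') <= L * dist1 n c c'.

Definition inbox (n : nat) (lo hi c : nat -> R) : Prop :=
  forall i, (i < n)%nat -> lo i <= c i <= hi i.

Definition upd (c : nat -> R) (n : nat) (t : R) : nat -> R :=
  fun i => if Nat.eq_dec i n then t else c i.

Lemma dist1_ext n c c' d d' :
  (forall i, (i < n)%nat -> c i = d i /\ c' i = d' i) -> dist1 n c c' = dist1 n d d'.
Proof.
  induction n as [|n IH]; intros H; simpl; [reflexivity|].
  rewrite IH by (intros; apply H; lia). destruct (H n) as [-> ->]; [lia|reflexivity].
Qed.

Lemma dist1_diag n c : dist1 n c c = 0.
Proof. induction n; simpl; [|rewrite IHn, Rminus_diag, Rabs_R0]; lra. Qed.

Lemma dist1_upd n c c' x y : dist1 (S n) (upd c n x) (upd c' n y) = dist1 n c c' + Rabs (x - y).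
Proof.
  simpl. unfold upd at 3 4. destruct (Nat.eq_dec n n) as [_|]; [|lia]. f_equal.
  apply dist1_ext. intros i Hi. unfold upd. destruct (Nat.eq_dec i n); [lia|auto].
Qed.

Lemma lipschitz1_eq n L f c c' :
  lipschitz1 n L f -> (forall i, (i < n)%nat -> c i = c' i) -> f c = f c'.
Proof.
  intros Hf Hcc'. specialize (Hf c c').
  rewrite (dist1_ext n c c' c c) in Hf by (intros i Hi; rewrite Hcc'; auto).
  rewrite dist1_diag, Rmult_0_r in Hf. apply Rabs_le_between in Hf. lra.
Qed.

Lemma lipschitz_continuity_pt (h : R -> R) L :
  0 <= L -> (forall x y, Rabs (h x - h y) <= L * Rabs (x - y)) -> forall x, continuity_pt h x.
Proof.
  intros HL Hh x eps Heps. exists (eps / (L + 1)). split; [apply Rdiv_lt_0_compat; lra|].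
  intros y [_ Hy]. simpl in *. unfold R_dist in *.
  apply Rle_lt_trans with (L * Rabs (y - x)); [apply Hh|].
  apply Rle_lt_trans with ((L + 1) * Rabs (y - x)); [pose proof (Rabs_pos (y - x)); nra|].
  apply Rmult_lt_reg_r with (/ (L + 1)); [apply Rinv_0_lt_compat; lra|].
  replace ((L + 1) * Rabs (y - x) * / (L + 1)) with (Rabs (y - x)) by (field; lra).
  exact Hy.
Qed.

(* Induction on the number of coordinates: the partial maximum over the first
   [n] coordinates is a Lipschitz, hence continuous, function of the last one. *)
Lemma box_max : forall n f L lo hi, 0 <= L -> (forall i, lo i <= hi i) ->
  lipschitz1 n L f -> exists v, ismax (inbox n lo hi) f v.
Proof.
  induction n as [|n IH]; intros f L lo hi HL Hlh Hf.
  - exists (f lo). split.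
    + exists lo. split; [intros i Hi; lia|reflexivity].
    + intros c _. right. apply (lipschitz1_eq 0 L f); [exact Hf|intros; lia].
  - set (ft := fun t c => f (upd c n t)).
    assert (Hft : forall t, lipschitz1 n L (ft t)).
    { intros t c c'. unfold ft. rewrite <- (Rplus_0_r (dist1 n c c')).
      rewrite <- (Rabs_R0), <- (Rminus_diag t), <- dist1_upd. apply Hf. }
    set (h := fun t => epsilon (inhabits 0) (ismax (inbox n lo hi) (ft t))).
    assert (Hh : forall t, ismax (inbox n lo hi) (ft t) (h t)).
    { intros t. apply epsilon_spec, (IH (ft t) L lo hi HL Hlh (Hft t)). }
    assert (Hhlip : forall x y, Rabs (h x - h y) <= L * Rabs (x - y)).
    { apply (ismax_lipschitz (inbox n lo hi) ft h (fun x y => L * Rabs (x - y)) Hh).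
      intros x y c _. unfold ft.
      rewrite <- (Rplus_0_l (Rabs (x - y))), <- (dist1_diag n c), <- dist1_upd. apply Hf. }
    destruct (continuity_ab_maj h (lo n) (hi n) (Hlh n)) as [tm [Htm Hin]].
    { intros; eapply lipschitz_continuity_pt; eauto. }
    destruct (Hh tm) as [[c0 [Hc0 E0]] _].
    exists (h tm). split.
    + exists (upd c0 n tm). split; [|exact E0].
      intros i Hi. unfold upd. destruct (Nat.eq_dec i n); [subst; auto|apply Hc0; lia].
    + intros c Hc.
      assert (Ec : f c = ft (c n) c).
      { apply (lipschitz1_eq (S n) L f); [exact Hf|].
        intros i _. unfold upd. destruct (Nat.eq_dec i n); subst; auto. }
      rewrite Ec. apply Rle_trans with (h (c n)); [|apply Htm, Hc; lia].
      apply Hh. intros i Hi. apply Hc. lia.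
Qed.

Lemma box_min n f L lo hi : 0 <= L -> (forall i, lo i <= hi i) -> lipschitz1 n L f ->
  exists cs, inbox n lo hi cs /\ forall c, inbox n lo hi c -> f cs <= f c.
Proof.
  intros HL Hlh Hf.
  destruct (box_max n (fun c => - f c) L lo hi HL Hlh) as [v [[cs [Hcs Ev]] Hv]].
  { intros c c'. rewrite <- Rabs_Ropp. replace (- (- f c - - f c')) with (f c - f c') by ring.
    apply Hf. }
  exists cs. split; [exact Hcs|]. intros c Hc. apply Hv in Hc. lra.
Qed.

Lemma inBand_cons p L w : inBand (p :: L) w <-> (fst p <= w <= snd p) \/ inBand L w.
Proof.
  unfold inBand; split.
  - intros [q [[<-|Hq] Hw]]; [left; exact Hw|right; eauto].
  - intros [Hw|[q [Hq Hw]]]; [exists p|exists q]; simpl; auto.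
Qed.

Lemma band_max L h : L <> nil -> (forall p, In p L -> fst p <= snd p) ->
  (forall w, continuity_pt h w) -> exists v, ismax (inBand L) h v.
Proof.
  intros HL Hle Hh. induction L as [|p L IH]; [congruence|].
  destruct (continuity_ab_maj h (fst p) (snd p)) as [wp [Hwp Hp]].
  { apply Hle. now left. } { intros; apply Hh. }
  assert (Hmp : ismax (fun w => fst p <= w <= snd p) h (h wp)) by (split; eauto).
  destruct L as [|q L].
  - exists (h wp). apply (ismax_congr (fun w => fst p <= w <= snd p) _ h h _); [|reflexivity|exact Hmp].
    intros w. rewrite inBand_cons. split; [intros [Hw|[q [[] _]]]; exact Hw|now left].
  - destruct IH as [v Hv]; [congruence|intros; apply Hle; now right|].
    exists (Rmax (h wp) v).
    exact (ismax_congr _ _ h h _ (inBand_cons p _) (fun _ _ => eq_refl) (ismax_union _ _ h _ _ Hmp Hv)).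
Qed.

Lemma valid_band_interval L : valid_band L -> exists a b, a < b /\ forall w, a <= w <= b -> inBand L w.
Proof.
  intros [HL Hv]. destruct L as [|p L]; [congruence|].
  destruct (Hv p (in_eq _ _)) as [_ [Hp _]].
  exists (fst p), (snd p). split; [exact Hp|]. intros w Hw. apply inBand_cons. now left.
Qed.

Lemma resp_S N c w : resp (S N) c w = resp N c w + c (S N) * cos (INR (S N) * w).
Proof. reflexivity. Qed.

Lemma resp_ext N c d w : (forall n, (n <= N)%nat -> c n = d n) -> resp N c w = resp N d w.
Proof.
  induction N as [|N IH]; intros H; [unfold resp; simpl; rewrite H; auto|].
  rewrite !resp_S, IH, H; auto.
Qed.

Lemma resp_lin N a b x y w :
  resp N (fun n => a * x n + b * y n) w = a * resp N x w + b * resp N y w.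
Proof. induction N; [unfold resp; simpl; ring|rewrite !resp_S, IHN; ring]. Qed.

Lemma resp_scale N a x w : resp N (fun n => a * x n) w = a * resp N x w.
Proof. induction N; [unfold resp; simpl; ring|rewrite !resp_S, IHN; ring]. Qed.

Lemma resp_eq0 N c w : (forall n, (n <= N)%nat -> c n = 0) -> resp N c w = 0.
Proof.
  intros H. rewrite (resp_ext N c (fun n => 0 * c n)) by (intros n Hn; rewrite H by exact Hn; ring).
  rewrite resp_scale. ring.
Qed.

Definition unit0 (n : nat) : R := if Nat.eq_dec n 0 then 1 else 0.

Lemma resp_unit0 N w : resp N unit0 w = 1.
Proof.
  induction N; [unfold resp, unit0; simpl; rewrite Rmult_0_l, cos_0; ring|].
  rewrite resp_S, IHN. unfold unit0. destruct (Nat.eq_dec (S N) 0); [lia|ring].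
Qed.

Definition dresp (N : nat) (c : nat -> R) (w : R) : R :=
  sum_f_R0 (fun n => - (c n * INR n) * sin (INR n * w)) N.

Lemma dresp_S N c w :
  dresp (S N) c w = dresp N c w + - (c (S N) * INR (S N)) * sin (INR (S N) * w).
Proof. reflexivity. Qed.

Lemma dresp_eq0 N c w : (forall n, (n <= N)%nat -> c n = 0) -> dresp N c w = 0.
Proof.
  induction N; intros H; [unfold dresp; simpl; rewrite H; [ring|lia]|].
  rewrite dresp_S, IHN, H; [ring|lia|intros; apply H; lia].
Qed.

Lemma is_derive_resp N c w : is_derive (resp N c) w (dresp N c w).
Proof.
  induction N.
  - unfold resp, dresp; simpl. auto_derive; auto. ring.
  - apply (is_derive_ext (fun w => resp N c w + c (S N) * cos (INR (S N) * w))); [reflexivity|].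
    rewrite dresp_S. apply @is_derive_plus; [exact IHN|]. set (k := INR (S N)). auto_derive; auto. ring.
Qed.

Lemma is_derive_dresp N c w :
  is_derive (dresp N c) w (resp N (fun n => - INR n ^ 2 * c n) w).
Proof.
  induction N.
  - unfold resp, dresp; simpl. auto_derive; auto. ring.
  - apply (is_derive_ext (fun w => dresp N c w + - (c (S N) * INR (S N)) * sin (INR (S N) * w)));
      [reflexivity|].
    rewrite resp_S. apply @is_derive_plus; [exact IHN|]. set (k := INR (S N)). auto_derive; auto. ring.
Qed.

Lemma continuity_pt_resp N c w : continuity_pt (resp N c) w.
Proof.
  apply continuity_pt_filterlim, (@ex_derive_continuous R_AbsRing R_NormedModule).
  eexists. apply is_derive_resp.
Qed.

Lemma continuity_pt_abs_affine_resp N c a b w :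
  continuity_pt (fun w => Rabs (a * resp N c w + b)) w.
Proof.
  apply (continuity_pt_comp (fun w => a * resp N c w + b) Rabs); [|apply Rcontinuity_abs].
  apply (continuity_pt_plus (mult_real_fct a (resp N c)) (fct_cte b));
    [apply continuity_pt_scal, continuity_pt_resp|apply continuity_pt_const; now intros].
Qed.

Lemma resp_lipschitz N c c' w : Rabs (resp N c w - resp N c' w) <= dist1 (S N) c c'.
Proof.
  assert (Hcos : forall n, Rabs (c n - c' n) * Rabs (cos (INR n * w)) <= Rabs (c n - c' n)).
  { intros n. pose proof (Rabs_pos (c n - c' n)).
    assert (Rabs (cos (INR n * w)) <= 1) by (apply Rabs_le, COS_bound). nra. }
  induction N.
  - unfold resp. simpl. rewrite Rplus_0_l, <- Rmult_minus_distr_r, Rabs_mult. apply Hcos.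
  - rewrite !resp_S. change (dist1 (S (S N)) c c')
      with (dist1 (S N) c c' + Rabs (c (S N) - c' (S N))).
    replace (resp N c w + c (S N) * cos (INR (S N) * w)
             - (resp N c' w + c' (S N) * cos (INR (S N) * w)))
      with ((resp N c w - resp N c' w) + (c (S N) - c' (S N)) * cos (INR (S N) * w)) by ring.
    eapply Rle_trans; [apply Rabs_triang|]. rewrite Rabs_mult.
    apply Rplus_le_compat; [exact IHN|apply Hcos].
Qed.

Lemma is_derive_vanishing (f : R -> R) a b w l :
  a < w < b -> (forall y, a < y < b -> f y = 0) -> is_derive f w l -> l = 0.
Proof.
  intros Hw Hf Hd.
  assert (Hd0 : is_derive (fun _ : R => 0) w l).
  { apply (is_derive_ext_loc f); [|exact Hd].
    apply (locally_interval _ w a b); simpl; try lra.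
    intros y H1 H2. apply Hf. simpl in *. lra. }
  apply is_derive_unique in Hd0. rewrite Derive_const in Hd0. auto.
Qed.

(* The cosines [cos (n w)], [n <= N], are linearly independent on every open
   interval: [resp'' + (N+1)^2 resp] kills the top term, and the top
   coefficient is then recovered from [resp] and [resp'] via [cos^2 + sin^2 = 1]. *)
Lemma resp_vanish N c a b : a < b -> (forall w, a < w < b -> resp N c w = 0) ->
  forall n, (n <= N)%nat -> c n = 0.
Proof.
  revert c. induction N as [|N IH]; intros c Hab H n Hn.
  - assert (n = 0%nat) by lia. subst n. specialize (H ((a + b) / 2) ltac:(lra)).
    unfold resp in H. simpl in H. rewrite Rmult_0_l, cos_0 in H. lra.
  - assert (H1 : forall w, a < w < b -> dresp (S N) c w = 0).
    { intros w Hw. eapply is_derive_vanishing; [exact Hw|exact H|apply is_derive_resp]. }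
    assert (H2 : forall w, a < w < b -> resp (S N) (fun n => - INR n ^ 2 * c n) w = 0).
    { intros w Hw. eapply is_derive_vanishing; [exact Hw|exact H1|apply is_derive_dresp]. }
    set (k := INR (S N)). assert (Hk : 0 < k) by (apply lt_0_INR; lia).
    set (c' := fun n => k ^ 2 * c n + 1 * (- INR n ^ 2 * c n)).
    assert (H3 : forall w, a < w < b -> resp N c' w = 0).
    { intros w Hw. pose proof (resp_lin (S N) (k ^ 2) 1 c (fun n => - INR n ^ 2 * c n) w) as E.
      rewrite H, H2, resp_S in E by exact Hw. fold c' in E.
      replace (k ^ 2 * c (S N) + 1 * (- INR (S N) ^ 2 * c (S N))) with 0 in E
        by (unfold k; ring).
      lra. }
    assert (Hlow : forall m, (m <= N)%nat -> c m = 0).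
    { intros m Hm. pose proof (IH c' Hab H3 m Hm) as E. unfold c' in E.
      assert (INR m < k) by (apply lt_INR; lia). pose proof (pos_INR m).
      assert (Hkm : k ^ 2 - INR m ^ 2 <> 0) by nra.
      apply (Rmult_eq_reg_l (k ^ 2 - INR m ^ 2)); [lra|exact Hkm]. }
    destruct (Nat.eq_dec n (S N)) as [->|]; [|apply Hlow; lia].
    set (w := (a + b) / 2).
    specialize (H w ltac:(unfold w; lra)). specialize (H1 w ltac:(unfold w; lra)).
    rewrite resp_S, resp_eq0 in H by exact Hlow. rewrite dresp_S, dresp_eq0 in H1 by exact Hlow.
    fold k in H, H1.
    assert (Hc : c (S N) * cos (k * w) = 0) by lra.
    assert (Hs : c (S N) * sin (k * w) = 0) by (apply (Rmult_eq_reg_l (- k)); lra).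
    pose proof (sin2_cos2 (k * w)) as Htrig. unfold Rsqr in Htrig.
    transitivity ((c (S N) * sin (k * w)) * sin (k * w) + (c (S N) * cos (k * w)) * cos (k * w)).
    + transitivity (c (S N) * (sin (k * w) * sin (k * w) + cos (k * w) * cos (k * w)));
        [rewrite Htrig|]; ring.
    + rewrite Hs, Hc. ring.
Qed.

Definition face_lo (j : nat) : nat -> R := fun i => if Nat.eq_dec i j then 1 else -1.

Lemma finite_pos_bound (P : nat -> R -> Prop) n :
  (forall j m m', m' <= m -> P j m -> P j m') ->
  (forall j, (j <= n)%nat -> exists m, 0 < m /\ P j m) ->
  exists m, 0 < m /\ forall j, (j <= n)%nat -> P j m.
Proof.
  intros Hmono HP. induction n as [|n IH].
  - destruct (HP 0%nat (le_n _)) as [m [Hm HPm]]. exists m. split; [exact Hm|].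
    intros j Hj. replace j with 0%nat by lia. exact HPm.
  - destruct IH as [m1 [Hm1 HP1]]; [intros; apply HP; lia|].
    destruct (HP (S n) (le_n _)) as [m2 [Hm2 HP2]].
    exists (Rmin m1 m2). split; [apply Rmin_pos; assumption|].
    intros j Hj. destruct (Nat.eq_dec j (S n)) as [->|].
    + apply (Hmono _ m2); [apply Rmin_r|exact HP2].
    + apply (Hmono _ m1); [apply Rmin_l|apply HP1; lia].
Qed.

Lemma exists_max_abs (c : nat -> R) N :
  exists j, (j <= N)%nat /\ forall i, (i <= N)%nat -> Rabs (c i) <= Rabs (c j).
Proof.
  induction N as [|N [j [Hj H]]].
  - exists 0%nat. split; [lia|]. intros i Hi. replace i with 0%nat by lia. lra.
  - destruct (Rle_dec (Rabs (c (S N))) (Rabs (c j))).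
    + exists j. split; [lia|]. intros i Hi.
      destruct (Nat.eq_dec i (S N)) as [->|]; [assumption|apply H; lia].
    + exists (S N). split; [lia|]. intros i Hi.
      destruct (Nat.eq_dec i (S N)) as [->|]; [lra|]. specialize (H i ltac:(lia)). lra.
Qed.

Section Coercivity.

Variables (N : nat) (a b : R).
Hypothesis Hab : a < b.

Definition supresp (c : nat -> R) : R :=
  epsilon (inhabits 0) (ismax (fun w => a <= w <= b) (fun w => Rabs (resp N c w))).

Lemma supresp_spec c : ismax (fun w => a <= w <= b) (fun w => Rabs (resp N c w)) (supresp c).
Proof.
  unfold supresp. apply epsilon_spec.
  destruct (continuity_ab_maj (fun w => Rabs (resp N c w)) a b) as [wm [Hwm Hin]].
  { lra. }
  { intros w _. apply (continuity_pt_ext (fun w => Rabs (1 * resp N c w + 0))).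
    { intros; f_equal; ring. } apply continuity_pt_abs_affine_resp. }
  eexists. split; [exists wm; split; eauto|exact Hwm].
Qed.

Lemma supresp_lipschitz : lipschitz1 (S N) 1 supresp.
Proof.
  intros c c'.
  apply (ismax_lipschitz _ _ _ (fun c c' => 1 * dist1 (S N) c c') supresp_spec).
  clear c c'.
  intros c c' w _. rewrite Rmult_1_l.
  eapply Rle_trans; [apply Rabs_triang_inv2|apply resp_lipschitz].
Qed.

(* The minimum of [supresp] on each face of the unit cube is attained, and it
   is nonzero by [resp_vanish]. *)
Lemma supresp_face_pos : exists m, 0 < m /\
  forall j, (j <= N)%nat ->
  forall u, inbox (S N) (face_lo j) (fun _ => 1) u -> m <= supresp u.
Proof.
  apply (finite_pos_bound (fun j m => forall u, inbox (S N) (face_lo j) (fun _ => 1) u ->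
                                                 m <= supresp u)).
  { intros j m m' Hm' Hm u Hu. specialize (Hm u Hu). lra. }
  intros j Hj.
  destruct (box_min (S N) supresp 1 (face_lo j) (fun _ => 1)) as [u0 [Hu0 Hmin]].
  { lra. } { intros i. unfold face_lo. destruct (Nat.eq_dec i j); lra. }
  { exact supresp_lipschitz. }
  exists (supresp u0). split; [|exact Hmin].
  destruct (Rlt_le_dec 0 (supresp u0)) as [|Hle]; [assumption|exfalso].
  destruct (supresp_spec u0) as [_ Hsup].
  assert (Hz : forall w, a < w < b -> resp N u0 w = 0).
  { intros w Hw. specialize (Hsup w ltac:(lra)). simpl in Hsup.
    pose proof (Rabs_pos (resp N u0 w)). apply Rabs_eq_0. lra. }
  pose proof (resp_vanish N u0 a b Hab Hz j Hj) as Hj0.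
  specialize (Hu0 j ltac:(lia)). unfold face_lo in Hu0.
  destruct (Nat.eq_dec j j); [lra|congruence].
Qed.

(* Normalising [c] by its largest coefficient lands on a face of the cube. *)
Lemma resp_coercive : exists m, 0 < m /\ forall c, exists w, a <= w <= b /\
  forall j, (j <= N)%nat -> m * Rabs (c j) <= Rabs (resp N c w).
Proof.
  destruct supresp_face_pos as [m [Hm Hface]]. exists m. split; [exact Hm|]. intros c.
  destruct (exists_max_abs c N) as [jm [Hjm Hmax]].
  destruct (Req_dec (c jm) 0) as [Hz|Hnz].
  - exists a. split; [lra|]. intros j Hj. specialize (Hmax j Hj). rewrite Hz, Rabs_R0 in Hmax.
    pose proof (Rabs_pos (c j)). pose proof (Rabs_pos (resp N c a)). nra.
  - set (u := fun i => c i / c jm).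
    assert (Hu : inbox (S N) (face_lo jm) (fun _ => 1) u).
    { intros i Hi. unfold face_lo, u. destruct (Nat.eq_dec i jm) as [->|].
      - rewrite Rdiv_diag by exact Hnz. lra.
      - apply Rabs_le_between. rewrite Rabs_div by exact Hnz.
        apply (Rdiv_le_1 _ _ (Rabs_pos_lt _ Hnz)), Hmax; lia. }
    destruct (supresp_spec u) as [[w [Hw Ew]] _].
    exists w. split; [exact Hw|]. intros j Hj.
    assert (E : resp N c w = c jm * resp N u w).
    { rewrite <- resp_scale. apply resp_ext. intros n _. unfold u. field. exact Hnz. }
    rewrite E, Rabs_mult, Ew.
    pose proof (Hface jm Hjm u Hu). pose proof (Hmax j Hj). pose proof (Rabs_pos (c j)). nra.
Qed.

End Coercivity.

Lemma werr_passband N LP K c w : inBand LP w -> werr N LP K c w = Rabs (resp N c w - 1).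
Proof.
  intros Hw. unfold werr, WK, Dd.
  destruct (excluded_middle_informative (inBand LP w)); [f_equal; ring|contradiction].
Qed.

Lemma werr_stopband N LP K c w : ~ inBand LP w -> werr N LP K c w = Rabs (K * resp N c w).
Proof.
  intros Hw. unfold werr, WK, Dd.
  destruct (excluded_middle_informative (inBand LP w)); [contradiction|f_equal; ring].
Qed.

Lemma werr_lipschitz N LP K c c' w :
  Rabs (werr N LP K c w - werr N LP K c' w) <= (1 + Rabs K) * dist1 (S N) c c'.
Proof.
  unfold werr. eapply Rle_trans; [apply Rabs_triang_inv2|].
  replace (WK LP K w * (resp N c w - Dd LP w) - WK LP K w * (resp N c' w - Dd LP w))
    with (WK LP K w * (resp N c w - resp N c' w)) by ring.
  rewrite Rabs_mult. apply Rmult_le_compat; [apply Rabs_pos|apply Rabs_pos| |apply resp_lipschitz].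
  unfold WK. pose proof (Rabs_pos K).
  destruct (excluded_middle_informative (inBand LP w)); [rewrite Rabs_R1|]; lra.
Qed.

Lemma valid_band_le L : valid_band L -> forall p, In p L -> fst p <= snd p.
Proof. intros [_ H] p Hp. destruct (H p Hp). lra. Qed.

Section WeightedError.

Variables (N : nat) (LP LS : list (R * R)).
Hypotheses (HP : valid_band LP) (HS : valid_band LS)
  (Hdisj : forall w, inBand LP w -> ~ inBand LS w).

(* The weighted error is continuous on each band separately (it jumps between
   them), so its maximum is the larger of the two band maxima. *)
Lemma max_err_exists K c : exists e, is_max_err N LP LS K c e.
Proof.
  destruct (band_max LP (fun w => Rabs (1 * resp N c w + -1))) as [eP HeP];
    [apply HP|apply valid_band_le, HP|intros; apply continuity_pt_abs_affine_resp|].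
  destruct (band_max LS (fun w => Rabs (K * resp N c w + 0))) as [eS HeS];
    [apply HS|apply valid_band_le, HS|intros; apply continuity_pt_abs_affine_resp|].
  exists (Rmax eP eS). apply (ismax_union (inBand LP) (inBand LS)).
  - apply (ismax_congr _ _ _ _ _ (fun w => iff_refl _)) with (2 := HeP).
    intros w Hw. rewrite werr_passband by exact Hw. f_equal. ring.
  - apply (ismax_congr _ _ _ _ _ (fun w => iff_refl _)) with (2 := HeS).
    intros w Hw. rewrite werr_stopband by (intro HwP; exact (Hdisj w HwP Hw)). f_equal. ring.
Qed.

Definition maxerr (K : R) (c : nat -> R) : R :=
  epsilon (inhabits 0) (is_max_err N LP LS K c).

Lemma maxerr_spec K c : is_max_err N LP LS K c (maxerr K c).
Proof. unfold maxerr. apply epsilon_spec, max_err_exists. Qed.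

Lemma maxerr_lipschitz K : lipschitz1 (S N) (1 + Rabs K) (maxerr K).
Proof.
  intros c c'.
  apply (ismax_lipschitz (fun w => inBand LP w \/ inBand LS w) (werr N LP K) (maxerr K)
           (fun c c' => (1 + Rabs K) * dist1 (S N) c c') (maxerr_spec K)).
  intros; apply werr_lipschitz.
Qed.

Lemma maxerr_ge_stopband K c w : 0 < K -> inBand LS w -> K * Rabs (resp N c w) <= maxerr K c.
Proof.
  intros HK Hw. destruct (maxerr_spec K c) as [_ Hmax].
  apply Rle_trans with (werr N LP K c w); [|apply Hmax; now right].
  rewrite werr_stopband by exact (fun HwP => Hdisj w HwP Hw).
  rewrite Rabs_mult, (Rabs_pos_eq K) by lra. lra.
Qed.

(* Coercivity bounds the coefficients of every [c] doing at least as well as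
   [c = 0], so a minimiser over a box is a global minimiser. *)
Lemma Delta_exists K : 0 < K -> exists c, is_Delta N LP LS K (maxerr K c).
Proof.
  intros HK.
  destruct (valid_band_interval LS HS) as [a [b [Hab Hin]]].
  destruct (resp_coercive N a b Hab) as [m [Hm Hcoer]].
  set (E0 := maxerr K (fun _ => 0)).
  assert (HE0 : 0 <= E0).
  { destruct (maxerr_spec K (fun _ => 0)) as [[w [_ Ew]] _]. unfold E0. rewrite <- Ew.
    apply Rabs_pos. }
  set (r := E0 / (K * m)).
  assert (Hr : 0 <= r) by (apply Rdiv_le_0_compat; nra).
  destruct (box_min (S N) (maxerr K) (1 + Rabs K) (fun _ => - r) (fun _ => r)) as [cs [Hcs Hmin]].
  { pose proof (Rabs_pos K). lra. } { intros; lra. } { apply maxerr_lipschitz. }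
  assert (Hopt : forall c, maxerr K cs <= maxerr K c).
  { intros c. destruct (Rle_lt_dec (maxerr K c) E0) as [Hc|Hc].
    - apply Hmin. intros j Hj. apply Rabs_le_between.
      destruct (Hcoer c) as [w [Hw Hbound]].
      apply (Rmult_le_reg_l (K * m)); [nra|]. unfold r. rewrite Rmult_div_assoc, Rmult_div_r by nra.
      specialize (Hbound j ltac:(lia)). pose proof (maxerr_ge_stopband K c w HK (Hin w Hw)). nra.
    - apply Rle_trans with E0; [apply Hmin; intros i _; simpl; lra|lra]. }
  exists cs. split; [exists cs; apply maxerr_spec|].
  intros c e He. rewrite (ismax_uniq _ _ _ _ He (maxerr_spec K c)). apply Hopt.
Qed.

Lemma max_err_pos K c e : 0 < K -> is_max_err N LP LS K c e -> 0 < e.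
Proof.
  intros HK [_ Hmax].
  destruct (Rlt_le_dec 0 e) as [|He]; [assumption|exfalso].
  destruct (valid_band_interval LS HS) as [a [b [Hab Hin]]].
  assert (Hz : forall w, a < w < b -> resp N c w = 0).
  { intros w Hw. assert (HwS : inBand LS w) by (apply Hin; lra).
    specialize (Hmax w (or_intror HwS)).
    rewrite werr_stopband, Rabs_mult, (Rabs_pos_eq K) in Hmax
      by (lra || exact (fun HwP => Hdisj w HwP HwS)).
    pose proof (Rabs_pos (resp N c w)). apply Rabs_eq_0. nra. }
  destruct (valid_band_interval LP HP) as [p [q [Hpq HinP]]].
  assert (HpP : inBand LP p) by (apply HinP; lra).
  specialize (Hmax p (or_introl HpP)).
  rewrite werr_passband, (resp_eq0 N c) in Hmax by (exact HpP || exact (resp_vanish N c a b Hab Hz)).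
  rewrite Rminus_0_l, Rabs_Ropp, Rabs_R1 in Hmax. lra.
Qed.

End WeightedError.

Definition blend (t : R) (c : nat -> R) (n : nat) : R := (1 - t) * c n + t * unit0 n.

Lemma resp_blend N t c w : resp N (blend t c) w = (1 - t) * resp N c w + t.
Proof. unfold blend. rewrite resp_lin, resp_unit0. ring. Qed.

Lemma werr_blend_lt N LP K1 K2 c d t w :
  0 < K1 < K2 -> 0 < d -> 0 < t <= 1 -> K1 * K2 * t < d * (K2 - K1) ->
  werr N LP K2 c w <= d -> werr N LP K1 (blend t c) w < d.
Proof.
  intros HK Hd Ht Hsmall Hw.
  destruct (excluded_middle_informative (inBand LP w)) as [HwP|HwS].
  - rewrite werr_passband in Hw |- * by exact HwP. rewrite resp_blend.
    replace ((1 - t) * resp N c w + t - 1) with ((1 - t) * (resp N c w - 1)) by ring.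
    rewrite Rabs_mult, (Rabs_pos_eq (1 - t)) by lra. nra.
  - rewrite werr_stopband in Hw |- * by exact HwS. rewrite resp_blend.
    rewrite Rabs_mult, (Rabs_pos_eq K2) in Hw by lra.
    rewrite Rabs_mult, (Rabs_pos_eq K1) by lra.
    assert (Hr : Rabs ((1 - t) * resp N c w + t) <= (1 - t) * Rabs (resp N c w) + t).
    { eapply Rle_trans; [apply Rabs_triang|].
      rewrite Rabs_mult, (Rabs_pos_eq (1 - t)), (Rabs_pos_eq t) by lra. lra. }
    pose proof (Rabs_pos (resp N c w)).
    apply (Rmult_lt_reg_l K2); [lra|].
    apply Rle_lt_trans with (K1 * ((1 - t) * (K2 * Rabs (resp N c w))) + K1 * K2 * t).
    + replace (K1 * ((1 - t) * (K2 * Rabs (resp N c w))) + K1 * K2 * t)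
        with (K2 * (K1 * ((1 - t) * Rabs (resp N c w) + t))) by ring.
      apply Rmult_le_compat_l; [lra|]. apply Rmult_le_compat_l; [lra|exact Hr].
    + assert (K1 * ((1 - t) * (K2 * Rabs (resp N c w))) <= K1 * d).
      { apply Rmult_le_compat_l; [lra|]. nra. }
      nra.
Qed.

Lemma small_step_exists K1 K2 d : 0 < K1 < K2 -> 0 < d ->
  exists t, 0 < t <= 1 /\ K1 * K2 * t < d * (K2 - K1).
Proof.
  intros HK Hd. set (q := d * (K2 - K1) / (2 * K1 * K2)).
  assert (Hq : K1 * K2 * q = d * (K2 - K1) / 2) by (unfold q; field; lra).
  exists (Rmin 1 q). split.
  - split; [apply Rmin_pos; [lra|unfold q; apply Rdiv_lt_0_compat; nra]|apply Rmin_l].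
  - apply Rle_lt_trans with (K1 * K2 * q); [apply Rmult_le_compat_l, Rmin_r; nra|nra].
Qed.

Theorem mainTheorem2 (N : nat) (LP LS : list (R * R)) :
  (1 <= N)%nat ->
  valid_band LP -> valid_band LS ->
  (forall w, inBand LP w -> ~ inBand LS w) ->
  forall K1 K2 : R, 0 < K1 -> K1 < K2 ->
  exists d1 d2 : R,
    is_Delta N LP LS K1 d1 /\ is_Delta N LP LS K2 d2 /\ d1 < d2.
Proof.
  intros _ HP HS Hdisj K1 K2 HK1 HK12.
  destruct (Delta_exists N LP LS HP HS Hdisj K1 HK1) as [c1 HD1].
  destruct (Delta_exists N LP LS HP HS Hdisj K2 ltac:(lra)) as [c2 HD2].
  pose proof (maxerr_spec N LP LS HP HS Hdisj K2 c2) as Hc2.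
  set (d2 := maxerr N LP LS K2 c2) in *.
  assert (Hd2 : 0 < d2) by exact (max_err_pos N LP LS HP HS Hdisj K2 c2 d2 ltac:(lra) Hc2).
  destruct (small_step_exists K1 K2 d2) as [t [Ht Hsmall]]; [lra|exact Hd2|].
  exists (maxerr N LP LS K1 c1), d2. split; [exact HD1|split; [exact HD2|]].
  destruct (maxerr_spec N LP LS HP HS Hdisj K1 (blend t c2)) as [[w [Hw Ew]] _].
  apply Rle_lt_trans with (maxerr N LP LS K1 (blend t c2)).
  - apply (proj2 HD1 (blend t c2)), maxerr_spec; assumption.
  - rewrite <- Ew. apply (werr_blend_lt N LP K1 K2 c2 d2 t w); try assumption; [lra|].
    apply Hc2, Hw.
Qed.
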